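(* Let $p(g\mid\mathbf w)=\sum_{k\in\mathcal A}\theta_kP_{(k)}(w_{-k},g)$ be an imitation kernel on a finite set $G$ with $\gcd(\mathcal A)=1$. If the $G$-stochastic function $P_{(\cdot)}$ is irreducible but its common period $\hat d$ satisfies $\hat d>1$, then $|\mathcal G(p)|>1$.
   Context: $\mathcal A\subset\mathbb N_+$, $\theta$ a probability on $\mathcal A$ with $\theta_k>0$ for $k\in\mathcal A$, $P_{(k)}$ stochastic matrices on $G$, $\mathbf w=(w_{-1},w_{-2},\dots)$. Compatibility: a law of $(X_n)_{n\in\mathbb Z}$ on $G^{\mathbb Z}$ is compatible with $p$ if $P(X_n=g\mid X_{n-1},X_{n-2},\dots)=p(g\mid X_{n-1},X_{n-2},\dots)$ a.s. for all $n,g$; $\mathcal G(p)$ is the set of compatible laws. Words $\mathcal A^*=\bigcup_{n\ge1}\mathcal A^n$, $P_{\mathbf a}=P_{(a_n)}\cdots P_{(a_1)}$, depth $s(\mathbf a)=\sum a_i$. Irreducible: for all $i,j$ some word has $P_{\mathbf a}(i,j)>0$. Period of $i$: $d_i=\gcd\{s(\mathbf a):P_{\mathbf a}(i,i)>0\}$; under irreducibility and $\gcd(\mathcal A)=1$ all $d_i$ equal a common value $\hat d$. *)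

From Stdlib Require Import Reals Arith List ZArith.
Open Scope R_scope.

(** Finite state space [G] is given by an exhaustive duplicate-free list [eG]
    together with decidable equality [eqG]. *)

Definition sumL {X : Type} (f : X -> R) (l : list X) : R :=
  fold_right (fun x acc => f x + acc) 0 l.

Definition ind (b : bool) : R := if b then 1 else 0.

Fixpoint words {G : Type} (eG : list G) (M : nat) : list (list G) :=
  match M with
  | O => nil :: nil
  | S M' => flat_map (fun w => map (fun g => g :: w) eG) (words eG M')
  end.

Definition isAt {G : Type} (eqG : forall x y : G, {x = y} + {x <> y})
  (w : list G) (i : nat) (g : G) : R :=
  match nth_error w i with
  | Some x => if eqG x g then 1 else 0
  | None => 0
  end.

(** Matrix product along a word: [matw P eG a] is
    P_a = P_(a_n) ... P_(a_1) for a = [a_1; ...; a_n]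
    (the empty word gives the identity, but only nonempty words are used). *)
Fixpoint matw {G : Type} (eqG : forall x y : G, {x = y} + {x <> y})
  (eG : list G) (P : nat -> G -> G -> R) (a : list nat) (i j : G) : R :=
  match a with
  | nil => if eqG i j then 1 else 0
  | a1 :: rest => sumL (fun h => matw eqG eG P rest i h * P a1 h j) eG
  end.

Definition depth (a : list nat) : nat := fold_right Nat.add 0%nat a.

Definition isGcdSet (S : nat -> Prop) (d : nat) : Prop :=
  (forall s, S s -> Nat.divide d s) /\
  (forall d', (forall s, S s -> Nat.divide d' s) -> Nat.divide d' d).

Definition isWord (A : nat -> Prop) (a : list nat) : Prop :=
  a <> nil /\ Forall A a.

Definition Irreducible {G : Type} eqG (eG : list G) (A : nat -> Prop)
  (P : nat -> G -> G -> R) : Prop :=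
  forall i j : G, exists a, isWord A a /\ matw eqG eG P a i j > 0.

Definition returnDepths {G : Type} eqG (eG : list G) (A : nat -> Prop)
  (P : nat -> G -> G -> R) (i : G) (s : nat) : Prop :=
  exists a, isWord A a /\ matw eqG eG P a i i > 0 /\ depth a = s.

Definition isPeriod {G : Type} eqG (eG : list G) A P (i : G) (d : nat) : Prop :=
  isGcdSet (returnDepths eqG eG A P i) d.

(** A law of (X_n)_{n in Z} on G^Z, given through its finite-dimensional
    distributions: [mu m w] = P(X_m = w_0, ..., X_{m+|w|-1} = w_{|w|-1}).
    By Kolmogorov's extension theorem (G finite) such consistent families
    are in bijection with probability measures on G^Z. *)
Definition IsLaw {G : Type} (eG : list G) (mu : Z -> list G -> R) : Prop :=
  (forall m, mu m nil = 1) /\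
  (forall m w, 0 <= mu m w) /\
  (forall m w, sumL (fun g => mu m (w ++ g :: nil)) eG = mu m w) /\
  (forall m w, sumL (fun g => mu (m - 1)%Z (g :: w)) eG = mu m w).

Definition expect {G : Type} (eG : list G) (mu : Z -> list G -> R)
  (m : Z) (M : nat) (f : list G -> R) : R :=
  sumL (fun w => mu m w * f w) (words eG M).

(** Compatibility of the law [mu] with the imitation kernel
    p(g | w) = sum_{k in A} theta_k P_(k)(w_{-k}, g):
    for every n, every event B = {(X_{n-L},...,X_{n-1}) in b} of the past and
    every g,
      E[1{X_n = g} 1_B] = E[p(g | X_{n-1}, X_{n-2}, ...) 1_B]
                        = sum_k theta_k sum_h P_(k)(h,g) P(X_{n-k} = h, B).
    Such events form a pi-system generating the past sigma-algebra, so this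
    is exactly P(X_n = g | past) = p(g | past) a.s. *)
Definition Compatible {G : Type} eqG (eG : list G) (theta : nat -> R)
  (P : nat -> G -> G -> R) (mu : Z -> list G -> R) : Prop :=
  forall (n : Z) (L : nat) (b : list G -> bool) (g : G),
    infinite_sum
      (fun k => theta k *
         sumL (fun h => P k h g *
           expect eG mu (n - Z.of_nat (L + k))%Z (L + k)
             (fun w => ind (b (skipn k w)) * isAt eqG w L h)) eG)
      (expect eG mu (n - Z.of_nat L)%Z (L + 1)
         (fun w => ind (b (firstn L w)) * isAt eqG w L g)).

(* Fix a state i0 and let the phase of a state j be the depth of a word leading
   from i0 to j.  All return depths to i0 are multiples of the period d, so a
   transition h -> g of positive probability under P_(k) raises the phase by k
   modulo d; since gcd A = 1, every residue modulo d is the phase of some state.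
   Call a configuration x phase-locked with label c if phase (x t) = c + t mod d
   for all t.  The kernel with memory truncated at N, started at time -N from a
   phase-locked boundary configuration and sending its missing weight to the
   boundary, keeps configurations phase-locked.  A cluster point (Tychonoff) of
   these laws as N grows is compatible with p and still phase-locked, and the
   labels 0 and 1 give laws whose one-site marginals have disjoint supports
   because d > 1. *)

From Pilot Require Import Defs.
From Stdlib Require Import Reals Arith List ZArith Lia Lra.
From Stdlib Require Import Classical ClassicalEpsilon.
From mathcomp Require all_boot all_order all_algebra all_classical all_reals all_analysis.
From mathcomp Require Rstruct Rstruct_topology.
Open Scope R_scope.
Set Bullet Behavior "Strict Subproofs".

Section FiniteSums.
Context {X : Type}.
Implicit Types (f g : X -> R) (l : list X).

Lemma sumL_app f l1 l2 : sumL f (l1 ++ l2) = sumL f l1 + sumL f l2.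
Proof. induction l1 as [|x l1 IH]; simpl; [lra|]. unfold sumL in *; simpl. rewrite IH. lra. Qed.

Lemma sumL_ext_in f g l : (forall x, In x l -> f x = g x) -> sumL f l = sumL g l.
Proof.
  induction l as [|x l IH]; intros H; simpl; [reflexivity|].
  unfold sumL in *; simpl. rewrite H, IH; auto with datatypes.
Qed.

Lemma sumL_ext f g l : (forall x, f x = g x) -> sumL f l = sumL g l.
Proof. intros H. apply sumL_ext_in. auto. Qed.

Lemma sumL_add f g l : sumL (fun x => f x + g x) l = sumL f l + sumL g l.
Proof. induction l as [|x l IH]; unfold sumL in *; simpl; [lra|]. rewrite IH. lra. Qed.

Lemma sumL_scal_l c f l : sumL (fun x => c * f x) l = c * sumL f l.
Proof. induction l as [|x l IH]; unfold sumL in *; simpl; [lra|]. rewrite IH. lra. Qed.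

Lemma sumL_scal_r c f l : sumL (fun x => f x * c) l = sumL f l * c.
Proof. induction l as [|x l IH]; unfold sumL in *; simpl; [lra|]. rewrite IH. lra. Qed.

Lemma sumL_zero l : sumL (fun _ => 0) l = 0.
Proof. induction l as [|x l IH]; unfold sumL in *; simpl; [lra|]. rewrite IH. lra. Qed.

Lemma sumL_nonneg f l : (forall x, In x l -> 0 <= f x) -> 0 <= sumL f l.
Proof.
  induction l as [|x l IH]; intros H; unfold sumL in *; simpl; [lra|].
  pose proof (H x (or_introl eq_refl)).
  pose proof (IH (fun y Hy => H y (or_intror Hy))). lra.
Qed.

Lemma sumL_le f g l : (forall x, In x l -> f x <= g x) -> sumL f l <= sumL g l.
Proof.
  intros H. assert (0 <= sumL (fun x => g x + -1 * f x) l).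
  { apply sumL_nonneg. intros x Hx. specialize (H x Hx). lra. }
  rewrite sumL_add, sumL_scal_l in H0. lra.
Qed.

Lemma sumL_ge_term f l x : (forall y, In y l -> 0 <= f y) -> In x l -> f x <= sumL f l.
Proof.
  intros H Hx. apply in_split in Hx as [l1 [l2 ->]].
  rewrite sumL_app. unfold sumL at 2; simpl. fold (sumL f l2).
  assert (0 <= sumL f l1) by (apply sumL_nonneg; intros; apply H; auto with datatypes).
  assert (0 <= sumL f l2) by (apply sumL_nonneg; intros; apply H; auto with datatypes).
  lra.
Qed.

Lemma sumL_neq0 f l : sumL f l <> 0 -> exists x, In x l /\ f x <> 0.
Proof.
  induction l as [|x l IH]; unfold sumL in *; simpl; intros H; [lra|].
  destruct (Req_dec (f x) 0) as [E|E].
  - destruct IH as [y [Hy Hf]]; [rewrite E in H; lra|]. eauto.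
  - eauto.
Qed.
End FiniteSums.

Lemma sumL_map {X Y : Type} (f : Y -> R) (g : X -> Y) l :
  sumL f (map g l) = sumL (fun x => f (g x)) l.
Proof. induction l as [|x l IH]; unfold sumL in *; simpl; [lra|]. rewrite IH. lra. Qed.

Lemma sumL_flat_map {X Y : Type} (f : Y -> R) (g : X -> list Y) l :
  sumL f (flat_map g l) = sumL (fun x => sumL f (g x)) l.
Proof. induction l as [|x l IH]; simpl; [reflexivity|]. rewrite sumL_app, IH. reflexivity. Qed.

Lemma sumL_comm {X Y : Type} (f : X -> Y -> R) l1 l2 :
  sumL (fun x => sumL (fun y => f x y) l2) l1 = sumL (fun y => sumL (fun x => f x y) l1) l2.
Proof.
  induction l1 as [|x l1 IH].
  - symmetry. apply sumL_zero.
  - unfold sumL at 1; simpl. fold (sumL (fun x => sumL (fun y => f x y) l2) l1).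
    rewrite IH, <- sumL_add. reflexivity.
Qed.

Lemma sumL_seq_sum_f_R0 (f : nat -> R) n : sumL f (seq 0 (S n)) = sum_f_R0 f n.
Proof.
  induction n as [|n IH]; [unfold sumL; simpl; lra|].
  rewrite seq_S, sumL_app, IH. unfold sumL; simpl. lra.
Qed.

Section Delta.
Context {G : Type} (eqG : forall x y : G, {x = y} + {x <> y}).

Lemma sumL_delta (l : list G) (a : G) (F : G -> R) :
  NoDup l -> In a l -> sumL (fun g => (if eqG a g then 1 else 0) * F g) l = F a.
Proof.
  intros Hnd Ha. apply in_split in Ha as [l1 [l2 ->]].
  apply NoDup_remove_2 in Hnd. rewrite in_app_iff in Hnd.
  rewrite sumL_app. unfold sumL at 2; simpl.
  fold (sumL (fun g => (if eqG a g then 1 else 0) * F g) l2).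
  rewrite !(sumL_ext_in _ (fun _ => 0) l1), !(sumL_ext_in _ (fun _ => 0) l2), !sumL_zero.
  - destruct (eqG a a); [lra | congruence].
  - intros x Hx. destruct (eqG a x) as [->|]; [tauto | lra].
  - intros x Hx. destruct (eqG a x) as [->|]; [tauto | lra].
Qed.

Lemma sumL_delta_r (l : list G) (a : G) (F : G -> R) :
  NoDup l -> In a l -> sumL (fun g => (if eqG g a then 1 else 0) * F g) l = F a.
Proof.
  intros Hnd Ha. rewrite <- (sumL_delta l a F) by auto. apply sumL_ext. intros g.
  destruct (eqG g a), (eqG a g); subst; congruence || lra.
Qed.

Lemma sumL_indicator (l : list G) (a : G) :
  NoDup l -> In a l -> sumL (fun g => if eqG a g then 1 else 0) l = 1.
Proof.
  intros Hnd Ha. transitivity (sumL (fun g => (if eqG a g then 1 else 0) * 1) l).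
  - apply sumL_ext. intros g. ring.
  - now apply sumL_delta.
Qed.
End Delta.

Lemma partial_sum_le_limit (f : nat -> R) l n :
  (forall k, 0 <= f k) -> infinite_sum f l -> sumL f (seq 0 n) <= l.
Proof.
  intros Hf Hl. apply Rnot_lt_le. intros Hlt.
  destruct (Hl (sumL f (seq 0 n) - l)) as [K HK]; [lra|].
  specialize (HK (max K n) (Nat.le_max_l K n)).
  rewrite <- sumL_seq_sum_f_R0 in HK. unfold Rdist in HK.
  replace (S (max K n)) with (n + (S (max K n) - n))%nat in HK by lia.
  rewrite seq_app, sumL_app in HK.
  assert (0 <= sumL f (seq (0 + n) (S (max K n) - n))) by (apply sumL_nonneg; auto).
  rewrite Rabs_right in HK by lra. lra.
Qed.

Definition cluster_point {I : Type} (f : nat -> I -> R) (mu : I -> R) : Prop :=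
  forall (cs : list I) (eps : R), 0 < eps -> forall N0 : nat,
    exists N, (N0 <= N)%nat /\ forall c, In c cs -> Rabs (f N c - mu c) < eps.

Module Tychonoff.
Import all_boot all_order all_algebra all_classical all_reals all_analysis.
Import Rstruct Rstruct_topology.
Import ArrowAsProduct.
Local Open Scope classical_set_scope.

Lemma unit_valued_cluster_point (I : Type) (f : nat -> I -> R) :
  (forall n i, Rle 0 (f n i) /\ Rle (f n i) 1) -> exists mu, cluster_point f mu.
Proof.
move=> f01; pose J := {classic I}.
pose K : set {ptws J -> R} := [set g | forall i : J, `[0%R, 1%R] (g i)].
have cK : compact K.
  exact: (@tychonoff J (fun=> R) (fun=> `[0%R, 1%R]) (fun=> @segment_compact R 0%R 1%R)).
pose F := (fun n => (f n : {ptws J -> R})) @ \oo.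
have FK : F K.
  exists 0%N => // n _ i /=; rewrite in_itv /=; have [f0 f1] := f01 n i.
  by apply/andP; split; apply/RleP.
have [mu [_ clmu]] := cK F (fmap_proper_filter _ _) FK.
exists mu => cs eps eps0 N0.
pose B : set {ptws J -> R} := [set g | forall c, In c cs -> Rlt (Rabs (g c - mu c)) eps].
have nbhs_coord (c : J) : nbhs (mu c) [set y : R | Rlt (Rabs (y - mu c)) eps].
  apply/nbhs_ballP; exists eps => /=; first exact/RltP.
  by move=> y /RltP; rewrite /= Rabs_minus_sym.
have nbhsB : nbhs mu B.
  rewrite {}/B; elim: cs => [|c cs IH].
    by apply: filterS filterT => g _ c [].
  have Bc : nbhs mu (proj c @^-1` [set y : R | Rlt (Rabs (y - mu c)) eps]).
    exact: proj_continuous (nbhs_coord c).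
  by apply: filterS (filterI Bc IH) => g [gc gcs] c' /= [<-|/gcs //]; exact: gc.
have Ftail : F [set g | exists N, (N0 <= N)%coq_nat /\ g = f N].
  by exists N0 => // n /= /ssrnat.leP Nn; exists n.
have [_ [[N [N0N ->]] fNB]] := clmu _ _ Ftail nbhsB.
by exists N.
Qed.
End Tychonoff.

Section FinitaryLipschitz.
Context {I : Type}.
Implicit Types (Lam : (I -> R) -> R).

(* Such functionals are continuous for the product topology, so (in)equalities
   between them pass from a sequence to its cluster points. *)
Definition fin_lipschitz Lam : Prop :=
  exists (cs : list I) (B : R), 0 <= B /\ forall f g dl, 0 <= dl ->
    (forall c, In c cs -> Rabs (f c - g c) <= dl) -> Rabs (Lam f - Lam g) <= B * dl.

Lemma fin_lipschitz_ext Lam Lam' :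
  (forall F, Lam F = Lam' F) -> fin_lipschitz Lam -> fin_lipschitz Lam'.
Proof.
  intros H [cs [B [HB HL]]]. exists cs, B. split; [exact HB|].
  intros f g dl Hdl Hc. rewrite <- !H. auto.
Qed.

Lemma fin_lipschitz_coord c : fin_lipschitz (fun F => F c).
Proof.
  exists (c :: nil), 1. split; [lra|]. intros f g dl _ Hc.
  rewrite Rmult_1_l. apply Hc. now left.
Qed.

Lemma fin_lipschitz_const a : fin_lipschitz (fun _ => a).
Proof.
  exists nil, 0. split; [lra|]. intros. unfold Rminus. rewrite Rplus_opp_r, Rabs_R0. lra.
Qed.

Lemma fin_lipschitz_add Lam1 Lam2 :
  fin_lipschitz Lam1 -> fin_lipschitz Lam2 -> fin_lipschitz (fun F => Lam1 F + Lam2 F).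
Proof.
  intros [cs1 [B1 [HB1 H1]]] [cs2 [B2 [HB2 H2]]]. exists (cs1 ++ cs2), (B1 + B2).
  split; [lra|]. intros f g dl Hdl Hc.
  assert (A1 := H1 f g dl Hdl (fun c Hi => Hc c (in_or_app _ _ _ (or_introl Hi)))).
  assert (A2 := H2 f g dl Hdl (fun c Hi => Hc c (in_or_app _ _ _ (or_intror Hi)))).
  replace (Lam1 f + Lam2 f - (Lam1 g + Lam2 g))
    with ((Lam1 f - Lam1 g) + (Lam2 f - Lam2 g)) by ring.
  eapply Rle_trans; [apply Rabs_triang | lra].
Qed.

Lemma fin_lipschitz_scal a Lam : fin_lipschitz Lam -> fin_lipschitz (fun F => a * Lam F).
Proof.
  intros [cs [B [HB H]]]. exists cs, (Rabs a * B).
  split; [apply Rmult_le_pos; [apply Rabs_pos | exact HB]|].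
  intros f g dl Hdl Hc. replace (a * Lam f - a * Lam g) with (a * (Lam f - Lam g)) by ring.
  rewrite Rabs_mult, Rmult_assoc. apply Rmult_le_compat_l; [apply Rabs_pos | auto].
Qed.

Lemma fin_lipschitz_sub Lam1 Lam2 :
  fin_lipschitz Lam1 -> fin_lipschitz Lam2 -> fin_lipschitz (fun F => Lam1 F - Lam2 F).
Proof.
  intros H1 H2. apply fin_lipschitz_ext with (fun F => Lam1 F + -1 * Lam2 F); [intros; ring|].
  apply fin_lipschitz_add, fin_lipschitz_scal; assumption.
Qed.

Lemma fin_lipschitz_abs Lam : fin_lipschitz Lam -> fin_lipschitz (fun F => Rabs (Lam F)).
Proof.
  intros [cs [B [HB H]]]. exists cs, B. split; [exact HB|]. intros f g dl Hdl Hc.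
  eapply Rle_trans; [apply Rabs_triang_inv2 | auto].
Qed.

Lemma fin_lipschitz_sumL {X : Type} (Lam : X -> (I -> R) -> R) l :
  (forall x, In x l -> fin_lipschitz (Lam x)) ->
  fin_lipschitz (fun F => sumL (fun x => Lam x F) l).
Proof.
  induction l as [|x l IH]; intros H.
  - apply fin_lipschitz_ext with (fun _ => 0); [reflexivity | apply fin_lipschitz_const].
  - apply fin_lipschitz_ext with (fun F => Lam x F + sumL (fun x => Lam x F) l); [reflexivity|].
    apply fin_lipschitz_add; [apply H; now left | apply IH; intros; apply H; now right].
Qed.

Lemma cluster_point_le f mu Lam c N0 : cluster_point f mu -> fin_lipschitz Lam ->
  (forall N, (N0 <= N)%nat -> Lam (f N) <= c) -> Lam mu <= c.
Proof.
  intros Hcp [cs [B [HB HL]]] Hle. apply Rnot_lt_le. intros Hlt.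
  set (e := Lam mu - c). set (dl := e / (B + 1)).
  assert (Hdl : 0 < dl) by (apply Rdiv_lt_0_compat; unfold e; lra).
  assert (HBdl : B * dl < e).
  { replace (B * dl) with (e - dl) by (unfold dl; field; lra). lra. }
  destruct (Hcp cs dl Hdl N0) as [N [HN Hc]].
  assert (Hclose := HL (f N) mu dl (Rlt_le _ _ Hdl) (fun c' Hi => Rlt_le _ _ (Hc c' Hi))).
  specialize (Hle N HN). rewrite Rabs_minus_sym in Hclose.
  pose proof (Rle_abs (Lam mu - Lam (f N))). unfold e in *. lra.
Qed.

Lemma cluster_point_eq f mu Lam v N0 : cluster_point f mu -> fin_lipschitz Lam ->
  (forall N, (N0 <= N)%nat -> Lam (f N) = v) -> Lam mu = v.
Proof.
  intros Hcp HL Heq.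
  assert (Hle : Lam mu <= v).
  { apply (cluster_point_le f mu Lam v N0 Hcp HL). intros N HN. rewrite Heq by exact HN. lra. }
  assert (Hge : -1 * Lam mu <= - v).
  { apply (cluster_point_le f mu (fun F => -1 * Lam F) (- v) N0 Hcp);
      [apply fin_lipschitz_scal, HL|].
    intros N HN. rewrite Heq by exact HN. lra. }
  lra.
Qed.
End FinitaryLipschitz.

Section Words.
Context {G : Type} (eqG : forall x y : G, {x = y} + {x <> y}) (eG : list G)
  (HeG : forall g : G, In g eG) (Hnd : NoDup eG).

Lemma In_words M w : In w (words eG M) <-> length w = M.
Proof.
  revert w; induction M as [|M IH]; intros w; simpl.
  - split; [intros [<-|[]]; reflexivity | destruct w; [auto | discriminate]].
  - rewrite in_flat_map. split.
    + intros [u [Hu Hw]]. apply in_map_iff in Hw as [g [<- _]]. simpl. f_equal. now apply IH.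
    + destruct w as [|g u]; [discriminate|]. intros Hl. injection Hl as Hl.
      exists u. split; [now apply IH | apply in_map_iff; eauto].
Qed.

Lemma NoDup_words M : NoDup (words eG M).
Proof.
  induction M as [|M IH]; simpl; [repeat constructor; simpl; tauto|].
  induction IH as [|u l Hu Hl IHl]; simpl; [constructor|].
  apply NoDup_app; [| exact IHl |].
  - apply NoDup_map_NoDup_ForallPairs; [|exact Hnd]. intros a b _ _ E. now injection E.
  - intros w Hw1 Hw2. apply in_map_iff in Hw1 as [g [<- _]].
    apply in_flat_map in Hw2 as [u' [Hu' Hw]]. apply in_map_iff in Hw as [g' [E _]].
    injection E as _ ->. contradiction.
Qed.

Lemma sumL_words_S M (f : list G -> R) :
  sumL f (words eG (S M)) = sumL (fun u => sumL (fun g => f (g :: u)) eG) (words eG M).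
Proof. simpl. rewrite sumL_flat_map. apply sumL_ext. intros u. apply sumL_map. Qed.

Lemma sumL_words_delta M (v : list G) (F : list G -> R) : length v = M ->
  sumL (fun w => (if list_eq_dec eqG v w then 1 else 0) * F w) (words eG M) = F v.
Proof. intros Hl. apply sumL_delta; [apply NoDup_words | now apply In_words]. Qed.
End Words.

Section WordMatrices.
Context {G : Type} (eqG : forall x y : G, {x = y} + {x <> y}) (eG : list G)
  (HeG : forall g : G, In g eG) (Hnd : NoDup eG)
  (A : nat -> Prop) (P : nat -> G -> G -> R)
  (HP_nonneg : forall k i j, A k -> 0 <= P k i j).

Lemma matw_app (x y : list nat) i j :
  matw eqG eG P (x ++ y) i j = sumL (fun h => matw eqG eG P y i h * matw eqG eG P x h j) eG.
Proof.
  revert i j; induction x as [|a x IH]; intros i j; simpl.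
  - symmetry. rewrite <- (sumL_delta_r eqG eG j (matw eqG eG P y i)) by auto.
    apply sumL_ext. intros h. lra.
  - rewrite (sumL_ext _ (fun h =>
      sumL (fun h' => matw eqG eG P y i h' * matw eqG eG P x h' h * P a h j) eG)).
    + rewrite sumL_comm. apply sumL_ext. intros h'. rewrite <- sumL_scal_l.
      apply sumL_ext. intros h. lra.
    + intros h. rewrite IH, <- sumL_scal_r. reflexivity.
Qed.

Lemma matw_nonneg (x : list nat) i j : Forall A x -> 0 <= matw eqG eG P x i j.
Proof.
  revert i j; induction x as [|a x IH]; intros i j HF; simpl.
  - destruct (eqG i j); lra.
  - inversion HF; subst. apply sumL_nonneg. intros h _. apply Rmult_le_pos; auto.
Qed.

Lemma matw_cons_pos (x : list nat) k i h j : Forall A x -> A k ->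
  matw eqG eG P x i h > 0 -> P k h j > 0 -> matw eqG eG P (k :: x) i j > 0.
Proof.
  intros Fx Ak H1 H2. simpl.
  eapply Rlt_le_trans; [|apply (sumL_ge_term _ _ h); [|apply HeG]].
  - now apply Rmult_lt_0_compat.
  - intros h' _. apply Rmult_le_pos; [apply matw_nonneg | apply HP_nonneg]; auto.
Qed.

Lemma matw_app_pos (x y : list nat) i h j : Forall A x -> Forall A y ->
  matw eqG eG P y i h > 0 -> matw eqG eG P x h j > 0 -> matw eqG eG P (x ++ y) i j > 0.
Proof.
  intros Fx Fy H1 H2. rewrite matw_app.
  eapply Rlt_le_trans; [|apply (sumL_ge_term _ _ h); [|apply HeG]].
  - now apply Rmult_lt_0_compat.
  - intros h' _. apply Rmult_le_pos; apply matw_nonneg; auto.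
Qed.
End WordMatrices.

Lemma depth_app x y : depth (x ++ y) = (depth x + depth y)%nat.
Proof. induction x as [|a x IH]; simpl; [reflexivity|]. rewrite IH. lia. Qed.

Lemma Nat2Z_divide a b : Nat.divide a b <-> (Z.of_nat a | Z.of_nat b)%Z.
Proof.
  split; intros [q Hq].
  - exists (Z.of_nat q). lia.
  - destruct (Nat.eq_dec a 0) as [->|Ha]; [exists 0%nat; lia|].
    exists (Z.to_nat q). nia.
Qed.

Section ResidueClosure.
Variables (A : nat -> Prop) (d : nat).
Hypothesis Hd : (0 < d)%nat.
Hypothesis HgcdA : isGcdSet A 1.

Inductive reachable : Z -> Prop :=
  | reachable_0 : reachable 0
  | reachable_step y k : reachable y -> A k -> reachable (y + Z.of_nat k)
  | reachable_mod y z : (Z.of_nat d | y - z)%Z -> reachable y -> reachable z.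

Lemma reachable_add x y : reachable x -> reachable y -> reachable (x + y).
Proof.
  intros Hx Hy. induction Hy as [|y k _ IH Ak|y z Hyz _ IH].
  - now rewrite Z.add_0_r.
  - rewrite Z.add_assoc. now apply reachable_step.
  - apply (reachable_mod (x + y)); [|exact IH].
    now replace (x + y - (x + z))%Z with (y - z)%Z by lia.
Qed.

Lemma reachable_mul_nat x n : reachable x -> reachable (Z.of_nat n * x).
Proof.
  intros Hx. induction n as [|n IH]; [exact reachable_0|].
  replace (Z.of_nat (S n) * x)%Z with (Z.of_nat n * x + x)%Z by lia. now apply reachable_add.
Qed.

Lemma reachable_mul x z : reachable x -> reachable (z * x).
Proof.
  intros Hx. destruct (Z_le_gt_dec 0 z).
  - replace z with (Z.of_nat (Z.to_nat z)) by lia. now apply reachable_mul_nat.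
  - (* [-(m x)] is congruent to [(d - 1) m x] *)
    apply (reachable_mod (Z.of_nat ((d - 1) * Z.to_nat (- z)) * x)); [|now apply reachable_mul_nat].
    exists (Z.of_nat (Z.to_nat (- z)) * x)%Z. rewrite Nat2Z.inj_mul, Nat2Z.inj_sub by lia. lia.
Qed.

Lemma reachable_all x : reachable x.
Proof.
  set (Pos := fun n => (0 < n)%nat /\ reachable (Z.of_nat n)).
  assert (Pd : Pos d).
  { split; [exact Hd|]. apply (reachable_mod 0); [exists (-1)%Z; lia | exact reachable_0]. }
  destruct (dec_inh_nat_subset_has_unique_least_element Pos (fun n => classic (Pos n))
             (ex_intro _ d Pd)) as [e [[[He Re] Hmin] _]].
  (* the least positive reachable [e] divides every reachable number, hence every [k] in [A] *)
  assert (Hdiv : forall y, reachable y -> (Z.of_nat e | y)%Z).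
  { intros y Hy. apply Z.mod_divide; [lia|].
    pose proof (Z.mod_pos_bound y (Z.of_nat e) ltac:(lia)).
    assert (Hr : reachable (y mod Z.of_nat e)).
    { rewrite Z.mod_eq by lia. replace (y - Z.of_nat e * (y / Z.of_nat e))%Z
        with (y + - (y / Z.of_nat e) * Z.of_nat e)%Z by lia.
      apply reachable_add; [exact Hy | now apply reachable_mul]. }
    apply NNPP. intros Hnz.
    assert (Pr : Pos (Z.to_nat (y mod Z.of_nat e))) by (split; [lia | now rewrite Z2Nat.id by lia]).
    apply Hmin in Pr. lia. }
  assert (e = 1%nat) as ->.
  { apply Nat.divide_1_r, (proj2 HgcdA). intros k Ak. apply Nat2Z_divide, Hdiv.
    rewrite <- (Z.add_0_l (Z.of_nat k)). now apply reachable_step; [apply reachable_0|]. }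
  rewrite <- (Z.mul_1_r x). now apply reachable_mul.
Qed.

Lemma gcd1_residue_closure (Q : Z -> Prop) : Q 0%Z ->
  (forall y k, Q y -> A k -> Q (y + Z.of_nat k)%Z) ->
  (forall y z, (Z.of_nat d | y - z)%Z -> Q y -> Q z) -> forall x, Q x.
Proof. intros H0 Hstep Hmod x. induction (reachable_all x); eauto. Qed.
End ResidueClosure.

Definition upd {G : Type} (x : Z -> G) (t : Z) (g : G) : Z -> G :=
  fun s => if Z.eq_dec s t then g else x s.

Definition determined_before {G : Type} (F : (Z -> G) -> R) (s : Z) : Prop :=
  forall x y, (forall t, (t < s)%Z -> x t = y t) -> F x = F y.

Lemma upd_at {G : Type} (x : Z -> G) s g : upd x s g s = g.
Proof. unfold upd. destruct (Z.eq_dec s s); [reflexivity | lia]. Qed.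

Lemma upd_before {G : Type} (x : Z -> G) s g t : (t < s)%Z -> upd x s g t = x t.
Proof. intros H. unfold upd. destruct (Z.eq_dec t s); [lia | reflexivity]. Qed.

Lemma determined_before_mono {G : Type} (F : (Z -> G) -> R) s s' :
  (s <= s')%Z -> determined_before F s -> determined_before F s'.
Proof. intros H HF x y Hxy. apply HF. intros t Ht. apply Hxy. lia. Qed.

Section PathSpace.
Context {G : Type} (eqG : forall x y : G, {x = y} + {x <> y}) (eG : list G)
  (HeG : forall g : G, In g eG) (Hnd : NoDup eG).
Variable q : (Z -> G) -> Z -> G -> R.
Hypothesis q_nonneg : forall x t g, 0 <= q x t g.
Hypothesis q_sum : forall x t, sumL (fun g => q x t g) eG = 1.

(* The sites [t, t+1, ..., t+M-1] of [x] are resampled one after the other,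
   site [s] with law [q y s] given the current configuration [y]. *)
Fixpoint path_prob (x : Z -> G) (t : Z) (u : list G) : R :=
  match u with
  | nil => 1
  | g :: u' => q x t g * path_prob (upd x t g) (t + 1) u'
  end.

Fixpoint extend (x : Z -> G) (t : Z) (u : list G) : Z -> G :=
  match u with
  | nil => x
  | g :: u' => extend (upd x t g) (t + 1) u'
  end.

Definition Epath (x : Z -> G) (t : Z) (M : nat) (F : (Z -> G) -> R) : R :=
  sumL (fun u => path_prob x t u * F (extend x t u)) (words eG M).

Lemma Epath_0 x t F : Epath x t 0 F = F x.
Proof. unfold Epath, sumL. simpl. lra. Qed.

Lemma Epath_S x t M F :
  Epath x t (S M) F = sumL (fun g => q x t g * Epath (upd x t g) (t + 1) M F) eG.
Proof.
  unfold Epath. rewrite sumL_words_S, sumL_comm. apply sumL_ext. intros g.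
  rewrite <- sumL_scal_l. apply sumL_ext. intros u. simpl. lra.
Qed.

Lemma Epath_ext x t M F F' : (forall y, F y = F' y) -> Epath x t M F = Epath x t M F'.
Proof. intros H. apply sumL_ext. intros u. now rewrite H. Qed.

Lemma Epath_add x t M F F' : Epath x t M (fun y => F y + F' y) = Epath x t M F + Epath x t M F'.
Proof. unfold Epath. rewrite <- sumL_add. apply sumL_ext. intros. lra. Qed.

Lemma Epath_scal_l x t M F c : Epath x t M (fun y => c * F y) = c * Epath x t M F.
Proof. unfold Epath. rewrite <- sumL_scal_l. apply sumL_ext. intros. lra. Qed.

Lemma Epath_scal_r x t M F c : Epath x t M (fun y => F y * c) = Epath x t M F * c.
Proof. unfold Epath. rewrite <- sumL_scal_r. apply sumL_ext. intros. lra. Qed.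

Lemma Epath_sumL {Y : Type} x t M (F : Y -> (Z -> G) -> R) l :
  Epath x t M (fun y => sumL (fun w => F w y) l) = sumL (fun w => Epath x t M (F w)) l.
Proof.
  unfold Epath. rewrite <- sumL_comm. apply sumL_ext. intros u. symmetry. apply sumL_scal_l.
Qed.

Lemma path_prob_nonneg x t u : 0 <= path_prob x t u.
Proof.
  revert x t; induction u as [|g u IH]; intros x t; simpl; [lra|].
  apply Rmult_le_pos; auto.
Qed.

Lemma Epath_le x t M F F' : (forall y, F y <= F' y) -> Epath x t M F <= Epath x t M F'.
Proof.
  intros H. apply sumL_le. intros u _. apply Rmult_le_compat_l; [apply path_prob_nonneg | auto].
Qed.

Lemma Epath_one x t M : Epath x t M (fun _ => 1) = 1.
Proof.
  revert x t; induction M as [|M IH]; intros x t; [apply Epath_0|].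
  rewrite Epath_S, <- (q_sum x t) at 1. apply sumL_ext. intros g. rewrite IH. lra.
Qed.

Lemma Epath_unit x t M F : (forall y, 0 <= F y <= 1) -> 0 <= Epath x t M F <= 1.
Proof.
  intros H. rewrite <- (Epath_one x t M). split.
  - rewrite <- (sumL_zero (words eG M)). apply sumL_le. intros u _.
    apply Rmult_le_pos; [apply path_prob_nonneg | apply H].
  - apply Epath_le. apply H.
Qed.

Lemma Epath_last M x t F : Epath x t (S M) F =
  Epath x t M (fun y => sumL (fun g => q y (t + Z.of_nat M) g * F (upd y (t + Z.of_nat M) g)) eG).
Proof.
  revert x t F; induction M as [|M IH]; intros x t F.
  - rewrite Epath_S, Epath_0, Z.add_0_r. apply sumL_ext. intros g. now rewrite Epath_0.
  - rewrite Epath_S, (Epath_S x t M). apply sumL_ext. intros g. rewrite IH.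
    f_equal. apply Epath_ext. intros y.
    now replace (t + 1 + Z.of_nat M)%Z with (t + Z.of_nat (S M))%Z by lia.
Qed.

Lemma Epath_horizon M M' x t F : determined_before F (t + Z.of_nat M) -> (M <= M')%nat ->
  Epath x t M' F = Epath x t M F.
Proof.
  intros HF Hle. induction Hle as [|M' Hle IH]; [reflexivity|].
  rewrite Epath_last, <- IH. apply Epath_ext. intros y.
  rewrite <- (Rmult_1_l (F y)), <- (q_sum y (t + Z.of_nat M')), <- sumL_scal_r.
  apply sumL_ext. intros g. f_equal. apply HF. intros s Hs. apply upd_before. lia.
Qed.

Lemma Epath_cond M x t Phi g0 : determined_before Phi (t + Z.of_nat M) ->
  Epath x t (S M) (fun y => Phi y * (if eqG (y (t + Z.of_nat M)%Z) g0 then 1 else 0)) =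
  Epath x t M (fun y => q y (t + Z.of_nat M) g0 * Phi y).
Proof.
  intros HPhi. rewrite Epath_last. apply Epath_ext. intros y.
  rewrite <- (sumL_delta_r eqG eG g0 (fun g => q y (t + Z.of_nat M) g * Phi y)) by auto.
  apply sumL_ext. intros g. rewrite upd_at.
  rewrite (HPhi (upd y (t + Z.of_nat M) g) y) by (intros; now apply upd_before).
  lra.
Qed.
End PathSpace.

Lemma indicator_iff {S P Q : Prop} (s : {S} + {~ S}) (p : {P} + {~ P}) (q : {Q} + {~ Q}) :
  (S <-> P /\ Q) -> (if s then 1 else 0) = (if p then 1 else 0) * (if q then 1 else 0).
Proof. intros H. destruct s, p, q; try lra; tauto. Qed.

Fixpoint window {G : Type} (x : Z -> G) (m : Z) (n : nat) : list G :=
  match n with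
  | O => nil
  | S n' => x m :: window x (m + 1) n'
  end.

Section Windows.
Context {G : Type} (eqG : forall x y : G, {x = y} + {x <> y}).
Implicit Types (x : Z -> G) (m : Z).

Lemma window_length x m n : length (window x m n) = n.
Proof. revert m; induction n as [|n IH]; intros m; simpl; auto. Qed.

Lemma window_app x m a b : window x m (a + b) = window x m a ++ window x (m + Z.of_nat a) b.
Proof.
  revert m; induction a as [|a IH]; intros m; simpl; [now rewrite Z.add_0_r|].
  rewrite IH. do 3 f_equal. lia.
Qed.

Lemma window_snoc x m n : window x m (S n) = window x m n ++ x (m + Z.of_nat n)%Z :: nil.
Proof. rewrite <- Nat.add_1_r. apply window_app. Qed.

Lemma window_agree x y m n : (forall t, (m <= t < m + Z.of_nat n)%Z -> x t = y t) ->
  window x m n = window y m n.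
Proof.
  revert m; induction n as [|n IH]; intros m H; simpl; [reflexivity|].
  rewrite H by lia. f_equal. apply IH. intros t Ht. apply H. lia.
Qed.

Lemma nth_error_window x m n i : (i < n)%nat ->
  nth_error (window x m n) i = Some (x (m + Z.of_nat i)%Z).
Proof.
  revert m i; induction n as [|n IH]; intros m i H; [lia|].
  destruct i as [|i]; simpl; [now rewrite Z.add_0_r|].
  rewrite IH by lia. do 2 f_equal. lia.
Qed.

Lemma firstn_window x m a b : firstn a (window x m (a + b)) = window x m a.
Proof.
  rewrite window_app, firstn_app, window_length, Nat.sub_diag, firstn_all2, app_nil_r;
    [reflexivity | now rewrite window_length].
Qed.

Lemma skipn_window x m a b : skipn a (window x m (a + b)) = window x (m + Z.of_nat a) b.
Proof.
  rewrite window_app, skipn_app, window_length, Nat.sub_diag, skipn_all2;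
    [reflexivity | now rewrite window_length].
Qed.

Lemma isAt_window x m n i h : (i < n)%nat ->
  isAt eqG (window x m n) i h = if eqG (x (m + Z.of_nat i)%Z) h then 1 else 0.
Proof. intros Hi. unfold isAt. now rewrite nth_error_window. Qed.

Definition window_is x m (w : list G) : R :=
  if list_eq_dec eqG (window x m (length w)) w then 1 else 0.

Lemma window_is_bounds x m w : 0 <= window_is x m w <= 1.
Proof. unfold window_is. destruct (list_eq_dec eqG _ _); lra. Qed.

Lemma window_is_determined m w :
  determined_before (fun x => window_is x m w) (m + Z.of_nat (length w)).
Proof.
  intros x y H. unfold window_is. rewrite (window_agree x y); [reflexivity|].
  intros t Ht. apply H. lia.
Qed.

Lemma window_is_single x m g : window_is x m (g :: nil) = if eqG (x m) g then 1 else 0.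
Proof.
  unfold window_is. simpl. rewrite <- (Rmult_1_r (if eqG (x m) g then 1 else 0)).
  apply (indicator_iff _ _ (left (eq_refl (@nil G)))). split.
  - intros E. injection E. tauto.
  - intros [-> _]. reflexivity.
Qed.

Lemma window_is_snoc x m w g : window_is x m (w ++ g :: nil) =
  window_is x m w * (if eqG (x (m + Z.of_nat (length w))%Z) g then 1 else 0).
Proof.
  unfold window_is. rewrite length_app, Nat.add_1_r, window_snoc.
  apply indicator_iff. split.
  - intros E. apply app_inj_tail in E. tauto.
  - intros [-> ->]. reflexivity.
Qed.

Lemma window_is_cons x m w g : window_is x (m - 1) (g :: w) =
  (if eqG (x (m - 1)%Z) g then 1 else 0) * window_is x m w.
Proof.
  unfold window_is. simpl. replace (m - 1 + 1)%Z with m by lia.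
  apply indicator_iff. split.
  - intros E. injection E. tauto.
  - intros [-> ->]. reflexivity.
Qed.
End Windows.

Section Compatibility.
Context {G : Type} (eqG : forall x y : G, {x = y} + {x <> y}) (eG : list G)
  (theta : nat -> R) (P : nat -> G -> G -> R).

Definition compat_summand (mu : Z -> list G -> R) (n : Z) (L : nat) (b : list G -> bool)
  (g : G) (k : nat) : R :=
  theta k * sumL (fun h => P k h g * expect eG mu (n - Z.of_nat (L + k))%Z (L + k)
    (fun w => Defs.ind (b (skipn k w)) * isAt eqG w L h)) eG.

Definition compat_total (mu : Z -> list G -> R) (n : Z) (L : nat) (b : list G -> bool)
  (g : G) : R :=
  expect eG mu (n - Z.of_nat L)%Z (L + 1)
    (fun w => Defs.ind (b (firstn L w)) * isAt eqG w L g).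

Lemma fin_lipschitz_expect m M (f : list G -> R) :
  fin_lipschitz (fun F : Z * list G -> R => expect eG (fun m' w => F (m', w)) m M f).
Proof.
  apply fin_lipschitz_sumL. intros w _.
  apply fin_lipschitz_ext with (fun F => f w * F (m, w)); [intros; ring|].
  apply fin_lipschitz_scal, fin_lipschitz_coord.
Qed.

Lemma fin_lipschitz_compat_summand n L b g k :
  fin_lipschitz (fun F : Z * list G -> R => compat_summand (fun m w => F (m, w)) n L b g k).
Proof.
  apply fin_lipschitz_scal, fin_lipschitz_sumL. intros h _.
  apply fin_lipschitz_scal, fin_lipschitz_expect.
Qed.

Lemma fin_lipschitz_compat_total n L b g :
  fin_lipschitz (fun F : Z * list G -> R => compat_total (fun m w => F (m, w)) n L b g).
Proof. apply fin_lipschitz_expect. Qed.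

Variable f : nat -> Z -> list G -> R.
Variable mu : Z * list G -> R.
Hypothesis Hcp : cluster_point (fun N p => f N (fst p) (snd p)) mu.

Lemma cluster_point_IsLaw : (forall N, IsLaw eG (f N)) -> IsLaw eG (fun m w => mu (m, w)).
Proof.
  intros Hf. split; [|split; [|split]]; intros m.
  - apply (cluster_point_eq _ _ (fun F => F (m, nil)) 1 0 Hcp (fin_lipschitz_coord _)).
    intros N _. apply (Hf N).
  - intros w. enough (-1 * mu (m, w) <= 0) by lra.
    apply (cluster_point_le _ _ (fun F => -1 * F (m, w)) 0 0 Hcp).
    + apply fin_lipschitz_scal, fin_lipschitz_coord.
    + intros N _. destruct (Hf N) as [_ [Hnonneg _]]. specialize (Hnonneg m w). simpl. lra.
  - intros w. apply Rminus_diag_uniq.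
    apply (cluster_point_eq _ _
             (fun F => sumL (fun g => F (m, w ++ g :: nil)) eG - F (m, w)) 0 0 Hcp).
    + apply fin_lipschitz_sub; [apply fin_lipschitz_sumL; intros|]; apply fin_lipschitz_coord.
    + intros N _. destruct (Hf N) as [_ [_ [Hsnoc _]]]. simpl. rewrite Hsnoc. ring.
  - intros w. apply Rminus_diag_uniq.
    apply (cluster_point_eq _ _
             (fun F => sumL (fun g => F ((m - 1)%Z, g :: w)) eG - F (m, w)) 0 0 Hcp).
    + apply fin_lipschitz_sub; [apply fin_lipschitz_sumL; intros|]; apply fin_lipschitz_coord.
    + intros N _. destruct (Hf N) as [_ [_ [_ Hcons]]]. simpl. rewrite Hcons. ring.
Qed.

Lemma cluster_point_Compatible : infinite_sum theta 1 ->
  (forall n L b g K, exists N0, forall N, (N0 <= N)%nat ->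
     Rabs (sumL (compat_summand (f N) n L b g) (seq 0 (S K)) - compat_total (f N) n L b g)
       <= 1 - sumL theta (seq 0 (S K))) ->
  Compatible eqG eG theta P (fun m w => mu (m, w)).
Proof.
  intros Htheta Hdefect n L b g eps Heps.
  destruct (Htheta eps Heps) as [K0 HK0]. exists K0. intros K HK.
  rewrite <- sumL_seq_sum_f_R0. unfold Rdist.
  destruct (Hdefect n L b g K) as [N0 HN0].
  assert (Hlim : Rabs (sumL (compat_summand (fun m w => mu (m, w)) n L b g) (seq 0 (S K))
                   - compat_total (fun m w => mu (m, w)) n L b g) <= 1 - sumL theta (seq 0 (S K))).
  { apply (cluster_point_le _ _ (fun F =>
        Rabs (sumL (compat_summand (fun m w => F (m, w)) n L b g) (seq 0 (S K))
              - compat_total (fun m w => F (m, w)) n L b g)) _ N0 Hcp); [|exact HN0].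
    apply fin_lipschitz_abs, fin_lipschitz_sub; [|apply fin_lipschitz_compat_total].
    apply fin_lipschitz_sumL. intros. apply fin_lipschitz_compat_summand. }
  specialize (HK0 K HK). rewrite <- sumL_seq_sum_f_R0 in HK0. unfold Rdist in HK0.
  pose proof (Rle_abs (1 - sumL theta (seq 0 (S K)))).
  rewrite Rabs_minus_sym in HK0. unfold compat_summand, compat_total in Hlim. lra.
Qed.
End Compatibility.

Section PhaseLockedLaws.
Context {G : Type} (eqG : forall x y : G, {x = y} + {x <> y}) (eG : list G)
  (HeG : forall g : G, In g eG) (Hnd : NoDup eG)
  (A : nat -> Prop) (HApos : forall k, A k -> (0 < k)%nat)
  (theta : nat -> R)
  (Htheta_pos : forall k, A k -> 0 < theta k)
  (Htheta_out : forall k, ~ A k -> theta k = 0)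
  (Htheta_sum : infinite_sum theta 1)
  (P : nat -> G -> G -> R)
  (HP_nonneg : forall k i j, A k -> 0 <= P k i j)
  (HP_row : forall k i, A k -> sumL (fun j => P k i j) eG = 1)
  (HgcdA : isGcdSet A 1)
  (Hirr : Irreducible eqG eG A P)
  (i0 : G) (d : nat) (Hd : (1 < d)%nat)
  (Hper0 : forall s, returnDepths eqG eG A P i0 s -> Nat.divide d s).

Definition word_from_i0 (j : G) : list nat :=
  proj1_sig (constructive_indefinite_description _ (Hirr i0 j)).

Lemma word_from_i0_spec j :
  isWord A (word_from_i0 j) /\ matw eqG eG P (word_from_i0 j) i0 j > 0.
Proof. exact (proj2_sig (constructive_indefinite_description _ (Hirr i0 j))). Qed.

Definition phase (j : G) : Z := Z.of_nat (depth (word_from_i0 j)).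

Lemma return_depth_divisible a : isWord A a -> matw eqG eG P a i0 i0 > 0 ->
  (Z.of_nat d | Z.of_nat (depth a))%Z.
Proof. intros Ha Hpos. apply Nat2Z_divide, Hper0. now exists a. Qed.

(* Compare the returns i0 -> h -> g -> i0 and i0 -> g -> i0. *)
Lemma phase_step k h g : A k -> P k h g > 0 -> (Z.of_nat d | phase g - phase h - Z.of_nat k)%Z.
Proof.
  intros Ak Hkhg.
  destruct (Hirr g i0) as [b [[Hb_ne Hb_A] Hb]].
  destruct (word_from_i0_spec h) as [[_ Hh_A] Hh].
  destruct (word_from_i0_spec g) as [[_ Hg_A] Hg].
  assert (Hne : forall a, b ++ a <> nil) by (intros a E; now apply app_eq_nil in E).
  assert (D1 : (Z.of_nat d | Z.of_nat (depth (b ++ k :: word_from_i0 h)))%Z).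
  { apply return_depth_divisible.
    - split; [apply Hne | apply Forall_app; auto].
    - apply (matw_app_pos eqG eG HeG Hnd A P HP_nonneg) with g; auto.
      now apply (matw_cons_pos eqG eG HeG A P HP_nonneg) with h. }
  assert (D2 : (Z.of_nat d | Z.of_nat (depth (b ++ word_from_i0 g)))%Z).
  { apply return_depth_divisible.
    - split; [apply Hne | apply Forall_app; auto].
    - now apply (matw_app_pos eqG eG HeG Hnd A P HP_nonneg) with g. }
  rewrite !depth_app in D1, D2. simpl in D1. unfold phase.
  replace (Z.of_nat (depth (word_from_i0 g)) - Z.of_nat (depth (word_from_i0 h)) - Z.of_nat k)%Z
    with (Z.of_nat (depth b + depth (word_from_i0 g))
          - Z.of_nat (depth b + (k + depth (word_from_i0 h))))%Z by lia.
  now apply Z.divide_sub_r.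
Qed.

Lemma row_pos_entry k i : A k -> exists j, P k i j > 0.
Proof.
  intros Ak. destruct (sumL_neq0 (fun j => P k i j) eG) as [j [_ Hj]];
    [rewrite HP_row; auto; lra|].
  exists j. pose proof (HP_nonneg k i j Ak). lra.
Qed.

Lemma phase_attained rho : exists s, (Z.of_nat d | phase s - rho)%Z.
Proof.
  replace rho with (phase i0 + (rho - phase i0))%Z by lia.
  apply (gcd1_residue_closure A d ltac:(lia) HgcdA
           (fun x => exists s, (Z.of_nat d | phase s - (phase i0 + x))%Z)).
  - exists i0. rewrite Z.add_0_r, Z.sub_diag. apply Z.divide_0_r.
  - intros y k [s Hs] Ak. destruct (row_pos_entry k s Ak) as [g Hg]. exists g.
    replace (phase g - (phase i0 + (y + Z.of_nat k)))%Z
      with ((phase g - phase s - Z.of_nat k) + (phase s - (phase i0 + y)))%Z by lia.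
    apply Z.divide_add_r; [now apply phase_step | exact Hs].
  - intros y z Hyz [s Hs]. exists s.
    replace (phase s - (phase i0 + z))%Z with ((phase s - (phase i0 + y)) + (y - z))%Z by lia.
    now apply Z.divide_add_r.
Qed.

Definition phase_locked (c : Z) (x : Z -> G) : Prop :=
  forall t, (Z.of_nat d | phase (x t) - c - t)%Z.

Definition boundary (c t : Z) : G :=
  proj1_sig (constructive_indefinite_description _ (phase_attained (c + t))).

Lemma boundary_phase_locked c : phase_locked c (boundary c).
Proof.
  intros t. unfold boundary.
  destruct (constructive_indefinite_description _ _) as [s Hs]; simpl.
  now replace (phase s - c - t)%Z with (phase s - (c + t))%Z by lia.
Qed.

Lemma theta_nonneg k : 0 <= theta k.
Proof.
  destruct (classic (A k)) as [Ak|nAk].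
  - now apply Rlt_le, Htheta_pos.
  - rewrite Htheta_out by exact nAk. lra.
Qed.

Lemma theta_0 : theta 0 = 0.
Proof. apply Htheta_out. intros A0. apply HApos in A0. lia. Qed.

Lemma theta_P_nonneg k h g : 0 <= theta k * P k h g.
Proof.
  destruct (classic (A k)) as [Ak|nAk].
  - apply Rmult_le_pos; [apply theta_nonneg | auto].
  - rewrite Htheta_out by exact nAk. lra.
Qed.

Lemma P_le_1 k i j : A k -> P k i j <= 1.
Proof. intros Ak. rewrite <- (HP_row k i Ak). apply (sumL_ge_term (fun j => P k i j)); auto. Qed.

Definition tail_mass (N : nat) : R := 1 - sumL theta (seq 0 N).

Lemma tail_mass_nonneg N : 0 <= tail_mass N.
Proof.
  unfold tail_mass. pose proof (partial_sum_le_limit theta 1 N theta_nonneg Htheta_sum). lra.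
Qed.

(* The kernel p with memory truncated at depth N; the missing weight is put on
   the boundary state, so that phase-locked configurations stay phase-locked. *)
Definition kernelN (c : Z) (N : nat) (x : Z -> G) (t : Z) (g : G) : R :=
  sumL (fun k => theta k * P k (x (t - Z.of_nat k)%Z) g) (seq 0 N) +
  tail_mass N * (if eqG (boundary c t) g then 1 else 0).

Lemma kernelN_nonneg c N x t g : 0 <= kernelN c N x t g.
Proof.
  apply Rplus_le_le_0_compat.
  - apply sumL_nonneg. intros. apply theta_P_nonneg.
  - apply Rmult_le_pos; [apply tail_mass_nonneg | destruct (eqG _ _); lra].
Qed.

Lemma kernelN_sum c N x t : sumL (fun g => kernelN c N x t g) eG = 1.
Proof.
  unfold kernelN. rewrite sumL_add, sumL_scal_l, sumL_indicator, sumL_comm by auto.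
  rewrite (sumL_ext _ theta); [unfold tail_mass; lra|].
  intros k. rewrite sumL_scal_l. destruct (classic (A k)) as [Ak|nAk].
  - rewrite HP_row by exact Ak. lra.
  - rewrite Htheta_out by exact nAk. lra.
Qed.

Local Notation EN c N M F :=
  (Epath eG (kernelN c N) (boundary c) (- Z.of_nat N) M F).

(* The chain started at time -N from the boundary configuration; windows
   lying before time -N are read off the boundary configuration itself. *)
Definition lawN (c : Z) (N : nat) (m : Z) (w : list G) : R :=
  EN c N (Z.to_nat (m + Z.of_nat (length w) + Z.of_nat N)) (fun x => window_is eqG x m w).

Lemma lawN_horizon c N m w M : (m + Z.of_nat (length w) <= - Z.of_nat N + Z.of_nat M)%Z ->
  lawN c N m w = EN c N M (fun x => window_is eqG x m w).
Proof.
  intros H. symmetry. apply Epath_horizon; [apply kernelN_sum | | lia].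
  eapply determined_before_mono; [|apply window_is_determined]. lia.
Qed.

Lemma lawN_unit c N m w : 0 <= lawN c N m w <= 1.
Proof.
  apply Epath_unit; [apply kernelN_nonneg | apply kernelN_sum | intros; apply window_is_bounds].
Qed.

Lemma lawN_IsLaw c N : IsLaw eG (lawN c N).
Proof.
  split; [|split; [|split]].
  - intros m. apply Epath_one, kernelN_sum.
  - intros m w. apply lawN_unit.
  - intros m w. set (M := Z.to_nat (m + Z.of_nat (length w) + 1 + Z.of_nat N)).
    rewrite (lawN_horizon c N m w M) by lia.
    rewrite (sumL_ext _ (fun g => EN c N M (fun x => window_is eqG x m (w ++ g :: nil)))).
    + rewrite <- Epath_sumL. apply Epath_ext. intros y.
      rewrite (sumL_ext _ (fun g => window_is eqG y m w *
                 (if eqG (y (m + Z.of_nat (length w))%Z) g then 1 else 0)))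
        by (intros; apply window_is_snoc).
      rewrite sumL_scal_l, sumL_indicator by auto. lra.
    + intros g. apply lawN_horizon. rewrite length_app. simpl. lia.
  - intros m w. set (M := Z.to_nat (m + Z.of_nat (length w) + Z.of_nat N)).
    rewrite (lawN_horizon c N m w M) by lia.
    rewrite (sumL_ext _ (fun g => EN c N M (fun x => window_is eqG x (m - 1) (g :: w)))).
    + rewrite <- Epath_sumL. apply Epath_ext. intros y.
      rewrite (sumL_ext _ (fun g => (if eqG (y (m - 1)%Z) g then 1 else 0) * window_is eqG y m w))
        by (intros; apply window_is_cons).
      rewrite sumL_scal_r, sumL_indicator by auto. lra.
    + intros g. apply lawN_horizon. simpl. lia.
Qed.

Lemma expect_lawN c N m M f Mb : (m + Z.of_nat M <= - Z.of_nat N + Z.of_nat Mb)%Z ->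
  expect eG (lawN c N) m M f = EN c N Mb (fun x => f (window x m M)).
Proof.
  intros H. unfold expect.
  rewrite (sumL_ext_in _ (fun w => EN c N Mb (fun x => window_is eqG x m w * f w))).
  - rewrite <- Epath_sumL. apply Epath_ext. intros y.
    rewrite <- (sumL_words_delta eqG eG HeG Hnd M (window y m M) f) by apply window_length.
    apply sumL_ext_in. intros w Hw. apply In_words in Hw; [|exact HeG].
    unfold window_is. now rewrite Hw.
  - intros w Hw. apply In_words in Hw; [|exact HeG].
    rewrite (lawN_horizon c N m w Mb) by lia. now rewrite Epath_scal_r.
Qed.

Lemma kernelN_phase c N x t g : phase_locked c x -> kernelN c N x t g <> 0 ->
  (Z.of_nat d | phase g - c - t)%Z.
Proof.
  intros Hx Hq. unfold kernelN in Hq. destruct (eqG (boundary c t) g) as [<-|Hn].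
  - apply boundary_phase_locked.
  - rewrite Rmult_0_r, Rplus_0_r in Hq. apply sumL_neq0 in Hq as [k [_ Hk]].
    destruct (classic (A k)) as [Ak|nAk]; [|rewrite Htheta_out in Hk by exact nAk; lra].
    assert (Hp : P k (x (t - Z.of_nat k)%Z) g > 0).
    { destruct (HP_nonneg k (x (t - Z.of_nat k)%Z) g Ak) as [|E]; [assumption|].
      rewrite <- E in Hk. lra. }
    replace (phase g - c - t)%Z with ((phase g - phase (x (t - Z.of_nat k)%Z) - Z.of_nat k) +
      (phase (x (t - Z.of_nat k)%Z) - c - (t - Z.of_nat k)))%Z by lia.
    apply Z.divide_add_r; [now apply phase_step | apply Hx].
Qed.

Lemma path_prob_phase c N u : forall x t, phase_locked c x ->
  path_prob (kernelN c N) x t u <> 0 -> phase_locked c (extend x t u).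
Proof.
  induction u as [|g u IH]; intros x t Hx Hu; simpl in *; [exact Hx|].
  apply IH; [|intros E; rewrite E in Hu; lra].
  intros s. unfold upd. destruct (Z.eq_dec s t) as [->|]; [|apply Hx].
  apply (kernelN_phase c N x t g Hx). intros E. rewrite E in Hu. lra.
Qed.

Lemma lawN_phase c N m g : ~ (Z.of_nat d | phase g - c - m)%Z -> lawN c N m (g :: nil) = 0.
Proof.
  intros Hg. unfold lawN, Epath. rewrite (sumL_ext _ (fun _ => 0)); [apply sumL_zero|]. intros u.
  destruct (Req_dec (path_prob (kernelN c N) (boundary c) (- Z.of_nat N) u) 0) as [E|E];
    [rewrite E; lra|].
  pose proof (path_prob_phase c N u _ _ (boundary_phase_locked c) E m) as Hm.
  rewrite window_is_single.
  destruct (eqG (extend (boundary c) (- Z.of_nat N) u m) g) as [<-|]; [contradiction | lra].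
Qed.

Section Approximation.
Variables (c : Z) (N : nat) (n : Z) (L : nat) (b : list G -> bool) (g : G).
Hypothesis Hn : (- Z.of_nat N <= n)%Z.

Let M0 := Z.to_nat (n + Z.of_nat N).
Let Phi (x : Z -> G) : R := Defs.ind (b (window x (n - Z.of_nat L) L)).

Lemma M0_spec : (- Z.of_nat N + Z.of_nat M0)%Z = n.
Proof. unfold M0. lia. Qed.

Lemma Phi_determined : determined_before Phi n.
Proof.
  intros x y H. unfold Phi. rewrite (window_agree x y); [reflexivity|].
  intros t Ht. apply H. lia.
Qed.

Lemma Phi_unit x : 0 <= Phi x <= 1.
Proof. unfold Phi, Defs.ind. destruct (b _); lra. Qed.

Lemma compat_summand_lawN k : compat_summand eqG eG theta P (lawN c N) n L b g k =
  theta k * EN c N M0 (fun y => P k (y (n - Z.of_nat k)%Z) g * Phi y).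
Proof.
  unfold compat_summand. destruct k as [|k]; [rewrite theta_0; lra|]. f_equal.
  set (t := (n - Z.of_nat (S k))%Z).
  transitivity (sumL (fun h =>
    EN c N M0 (fun y => P (S k) h g * ((if eqG (y t) h then 1 else 0) * Phi y))) eG).
  - apply sumL_ext. intros h. rewrite Epath_scal_l. f_equal.
    rewrite (expect_lawN c N _ _ _ M0) by (pose proof M0_spec; lia). apply Epath_ext. intros x.
    rewrite (Nat.add_comm L (S k)), skipn_window, isAt_window by lia. unfold Phi.
    replace (n - Z.of_nat (S k + L) + Z.of_nat (S k))%Z with (n - Z.of_nat L)%Z by lia.
    replace (n - Z.of_nat (S k + L) + Z.of_nat L)%Z with t by (unfold t; lia). ring.
  - rewrite <- Epath_sumL. apply Epath_ext. intros y.
    rewrite <- (sumL_delta eqG eG (y t) (fun h => P (S k) h g * Phi y)) by auto.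
    apply sumL_ext. intros h. ring.
Qed.

Lemma compat_summand_lawN_bounds k :
  0 <= compat_summand eqG eG theta P (lawN c N) n L b g k <= theta k.
Proof.
  rewrite compat_summand_lawN. destruct (classic (A k)) as [Ak|nAk].
  - assert (0 <= EN c N M0 (fun y => P k (y (n - Z.of_nat k)%Z) g * Phi y) <= 1).
    { apply Epath_unit; [apply kernelN_nonneg | apply kernelN_sum|]. intros y.
      pose proof (HP_nonneg k (y (n - Z.of_nat k)%Z) g Ak).
      pose proof (P_le_1 k (y (n - Z.of_nat k)%Z) g Ak). pose proof (Phi_unit y). nra. }
    pose proof (theta_nonneg k). nra.
  - rewrite Htheta_out by exact nAk. lra.
Qed.

Lemma compat_total_lawN : compat_total eqG eG (lawN c N) n L b g =
  sumL (compat_summand eqG eG theta P (lawN c N) n L b g) (seq 0 N) +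
  tail_mass N * ((if eqG (boundary c n) g then 1 else 0) * EN c N M0 Phi).
Proof.
  unfold compat_total. rewrite (expect_lawN c N _ _ _ (S M0)) by (pose proof M0_spec; lia).
  transitivity (EN c N (S M0) (fun x => Phi x *
                  (if eqG (x (- Z.of_nat N + Z.of_nat M0)%Z) g then 1 else 0))).
  - apply Epath_ext. intros x. rewrite firstn_window, isAt_window, M0_spec by lia. unfold Phi.
    now replace (n - Z.of_nat L + Z.of_nat L)%Z with n by lia.
  - rewrite (Epath_cond eqG eG HeG Hnd) by (rewrite M0_spec; apply Phi_determined).
    rewrite M0_spec. unfold kernelN.
    transitivity (EN c N M0 (fun y =>
      sumL (fun k => theta k * (P k (y (n - Z.of_nat k)%Z) g * Phi y)) (seq 0 N) +
      tail_mass N * ((if eqG (boundary c n) g then 1 else 0) * Phi y))).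
    + apply Epath_ext. intros y. rewrite Rmult_plus_distr_r, <- sumL_scal_r.
      f_equal; [apply sumL_ext; intros k|]; ring.
    + rewrite Epath_add, Epath_sumL, !Epath_scal_l. f_equal.
      apply sumL_ext. intros k. now rewrite compat_summand_lawN, Epath_scal_l.
Qed.

Lemma compat_defect_lawN K : (S K <= N)%nat ->
  Rabs (sumL (compat_summand eqG eG theta P (lawN c N) n L b g) (seq 0 (S K))
        - compat_total eqG eG (lawN c N) n L b g) <= 1 - sumL theta (seq 0 (S K)).
Proof.
  intros HK. rewrite compat_total_lawN.
  set (cst := (if eqG (boundary c n) g then 1 else 0) * EN c N M0 Phi).
  assert (Hcst : 0 <= cst <= 1).
  { assert (0 <= EN c N M0 Phi <= 1)
      by (apply Epath_unit; [apply kernelN_nonneg | apply kernelN_sum | apply Phi_unit]).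
    unfold cst. destruct (eqG _ _); lra. }
  assert (Hsplit : forall f,
    sumL f (seq 0 N) = sumL f (seq 0 (S K)) + sumL f (seq (S K) (N - S K))).
  { intros f. rewrite <- sumL_app, <- seq_app. do 2 f_equal. lia. }
  pose proof (tail_mass_nonneg N) as Htail. unfold tail_mass in *. rewrite !Hsplit in *.
  assert (Hrest : 0 <= sumL (compat_summand eqG eG theta P (lawN c N) n L b g) (seq (S K) (N - S K))
                    <= sumL theta (seq (S K) (N - S K))).
  { split; [apply sumL_nonneg | apply sumL_le]; intros k _; apply compat_summand_lawN_bounds. }
  rewrite Rabs_left1 by nra. nra.
Qed.
End Approximation.

Lemma phase_locked_compatible_law c : exists mu, IsLaw eG mu /\ Compatible eqG eG theta P mu /\
  forall m g, ~ (Z.of_nat d | phase g - c - m)%Z -> mu m (g :: nil) = 0.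
Proof.
  destruct (Tychonoff.unit_valued_cluster_point (Z * list G) (fun N p => lawN c N (fst p) (snd p)))
    as [mu Hcp]; [intros; apply lawN_unit|].
  exists (fun m w => mu (m, w)). split; [|split].
  - apply (cluster_point_IsLaw eG _ _ Hcp), lawN_IsLaw.
  - apply (cluster_point_Compatible eqG eG theta P _ _ Hcp Htheta_sum).
    intros n L b g K. exists (max (S K) (Z.to_nat (- n))). intros N HN.
    apply compat_defect_lawN; lia.
  - intros m g Hg.
    apply (cluster_point_eq _ _ (fun F => F (m, g :: nil)) 0 0 Hcp (fin_lipschitz_coord _)).
    intros N _. now apply lawN_phase.
Qed.

Lemma two_distinct_compatible_laws : exists mu1 mu2 : Z -> list G -> R,
  IsLaw eG mu1 /\ IsLaw eG mu2 /\
  Compatible eqG eG theta P mu1 /\ Compatible eqG eG theta P mu2 /\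
  exists (m : Z) (w : list G), mu1 m w <> mu2 m w.
Proof.
  destruct (phase_locked_compatible_law 0) as [mu0 [Law0 [Comp0 Lock0]]].
  destruct (phase_locked_compatible_law 1) as [mu1 [Law1 [Comp1 Lock1]]].
  exists mu0, mu1. do 4 (split; [assumption|]).
  destruct Law0 as [Hnil [_ [Hsnoc _]]].
  destruct (sumL_neq0 (fun g => mu0 0%Z (nil ++ g :: nil)) eG) as [g [_ Hg]];
    [rewrite Hsnoc, Hnil; lra|].
  exists 0%Z, (g :: nil). intros Heq.
  (* [g] would have phase both 0 and 1 modulo d at time 0 *)
  assert (D0 : (Z.of_nat d | phase g - 0 - 0)%Z).
  { apply NNPP. intros H. now apply Hg, Lock0. }
  assert (D1 : (Z.of_nat d | phase g - 1 - 0)%Z).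
  { apply NNPP. intros H. apply Hg. simpl. rewrite Heq. now apply Lock1. }
  assert (Hd1 : (Z.of_nat d | 1)%Z).
  { replace 1%Z with ((phase g - 0 - 0) - (phase g - 1 - 0))%Z by lia. now apply Z.divide_sub_r. }
  apply Z.divide_1_r in Hd1. lia.
Qed.
End PhaseLockedLaws.

Theorem mainTheorem5
  (G : Type) (eqG : forall x y : G, {x = y} + {x <> y})
  (eG : list G) (HeG : forall g : G, In g eG) (Hnd : NoDup eG)
  (Hne : eG <> nil)
  (A : nat -> Prop) (HApos : forall k, A k -> (0 < k)%nat)
  (theta : nat -> R)
  (Htheta_pos : forall k, A k -> 0 < theta k)
  (Htheta_out : forall k, ~ A k -> theta k = 0)
  (Htheta_sum : infinite_sum theta 1)
  (P : nat -> G -> G -> R)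
  (HP_nonneg : forall k i j, A k -> 0 <= P k i j)
  (HP_row : forall k i, A k -> sumL (fun j => P k i j) eG = 1)
  (HgcdA : isGcdSet A 1)
  (Hirr : Irreducible eqG eG A P)
  (Hper : exists dhat : nat, (1 < dhat)%nat /\
            forall i : G, isPeriod eqG eG A P i dhat) :
  exists mu1 mu2 : Z -> list G -> R,
    IsLaw eG mu1 /\ IsLaw eG mu2 /\
    Compatible eqG eG theta P mu1 /\ Compatible eqG eG theta P mu2 /\
    exists (m : Z) (w : list G), mu1 m w <> mu2 m w.
Proof.
  assert (Hi0 : exists i0 : G, In i0 eG).
  { destruct eG as [|i0 rest]; [congruence | exists i0; now left]. }
  destruct Hi0 as [i0 _]. destruct Hper as [d [Hd Hperiod]].
  exact (two_distinct_compatible_laws eqG eG HeG Hnd A HApos theta Htheta_pos Htheta_out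
           Htheta_sum P HP_nonneg HP_row HgcdA Hirr i0 d Hd (proj1 (Hperiod i0))).
Qed.
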